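(* In the blowup/base-change setting below, fix $p\in\{0,\dots,P-1\}$. Write $\Delta'=\sum_{m=1}^Nc_mM_m$ with $c_m\in\mathbb C^*$ and distinct monomials $M_m=t^{\tau_m}\big(\prod_{q=0}^Pe_q^{\epsilon_{q,m}}\big)s^{\sigma_m}$. Define $\epsilon_p^{(0)}:=\min\{\epsilon_{p,m}:\epsilon_{p+1,m}=0\}$ and $\epsilon_p^{(1)}:=\min\{\epsilon_{p+1,m}:\epsilon_{p,m}=0\}$, and for a positive integer $k$ define on $[0,k]$ the linear functions $\bar{\mathfrak L}_m(r):=(k-r)\epsilon_{p,m}+r\,\epsilon_{p+1,m}$ and $\bar{\mathfrak M}(r):=\min_{1\le m\le N}\bar{\mathfrak L}_m(r)$; let $\mathfrak M$ denote $\bar{\mathfrak M}$ for $k=1$, a function on $[0,1]$. (1) If there are special fibers at $B^{p,p+1}$, then $\epsilon_p^{(0)}>0$ and $\epsilon_p^{(1)}>0$. (2) $\bar n_{kp+r}=(k-r)n_p+r\,n_{p+1}+\bar{\mathfrak M}(r)$ for $r=0,1,\dots,k$. (3) $\bar{\mathfrak M}$ is piecewise linear and concave, $\bar{\mathfrak M}(kr)=k\,\mathfrak M(r)$ for $r\in[0,1]$, and $\mathfrak M(0)=\mathfrak M(1)=0$. The points $0<\mathcal R_1<\dots<\mathcal R_{\mathcal N-1}<1$ at which $\mathfrak M$ is not locally linear are rational numbers. (4) There are no special fibers at $\bar B^{\bar p,\bar p+1}$ for all $\bar p=kp,\dots,k(p+1)-1$ if and only if $k\mathcal R_\iota\in\mathbb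 Z$ for all $\iota=1,\dots,\mathcal N-1$, i.e. if and only if $k$ is a multiple of $k_0^{(p)}$, the smallest positive integer with this property (equal to the least common multiple of the denominators of the $\mathcal R_\iota$ in lowest terms).
   Context: Blowup setting. Let $f=f(s,t;u)$, $g=g(s,t;u)$ be complex polynomials, homogeneous in $(s,t)$ of degrees $8$ and $12$, defining a family of Weierstrass models $y^2=x^3+fxz^4+gz^6$ over $\mathbb P^1_{[s:t]}$ with parameter $u$; $\Delta:=4f^3+27g^2$. Let $a,b$ be the vanishing orders in $s$ at $s=0$ of $f,g$ for generic $u\ne0$ (not both $a\ge4$, $b\ge6$), and write $f=s^a\sum_i\mathcal F_i\,s^it^{8-a-i}$, $g=s^b\sum_j\mathcal G_j\,s^jt^{12-b-j}$. Assume the 3-fold vanishing orders of $(f,g,\Delta)$ at $(u,s)=(0,0)$ (largest $N$ with the function in $(u,s)^N$, $t=1$) are $(4+\alpha,6+\beta,12+\gamma)$ with $\alpha=0$ or $\beta=0$, and that this persists under all base changes $u\mapsto u^\ell$ (Classes 1–4). Blowup chain: $e_0:=u$; the $p$-th blowup substitutes $e_{p-1}\mapsto e_{p-1}e_p$, $s\mapsto se_p$ and divides $f,g,\Delta$ by $e_p^4,e_p^6,e_p^{12}$; $\mu_{q,i}$, $\nu_{q,j}$ are the vanishing orders in $e_q$ of the coefficients $\mathcal F_i(e_0,\dots)$, $\mathcal G_j(e_0,\dots)$; $P$ is the first number of blowups for which some $i<4-a$ with $\mathcal F_i\neq0$ has $\mu_{P,i}<4-a-i$ or some $j<6-b$ with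 $\mathcal G_j\ne0$ has $\nu_{P,j}<6-b-j$. Standing assumption: there is such an $i$ with $\mu_{P,i}=0$ or such a $j$ with $\nu_{P,j}=0$ (achievable by a preliminary base change). Base components $B^p=\{e_p=0\}$ form a chain, $B^{p,p+1}=\{e_p=e_{p+1}=0\}$. $n_p$ is the largest power of $e_p$ dividing $\Delta$ and $\Delta=\prod_qe_q^{n_q}\Delta'$. There is a special fiber at $B^{p,p+1}$ iff $\Delta'$ vanishes there, i.e. every monomial of $\Delta'$ is divisible by $e_p$ or $e_{p+1}$. Base change: for a positive integer $k$, the barred configuration $\bar{\mathcal Y}$ is obtained by substituting $u\mapsto u^k$ in $f,g$ and then performing the blowup chain, which now consists of $\bar P=kP$ blowups with coordinates $\bar e_0,\dots,\bar e_{\bar P}$; $\bar B^{\bar p}$, $\bar B^{\bar p,\bar p+1}$, $\bar n_{\bar p}$, $\bar\Delta'$ are defined analogously. *)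

From HB Require Import structures.
From mathcomp Require Import all_boot all_order all_algebra.
From mathcomp Require Import mpoly.
From mathcomp Require Import Rstruct.
From mathcomp.real_closed Require Import complex.

Set Implicit Arguments.
Unset Strict Implicit.
Unset Printing Implicit Defensive.

Import Order.TTheory GRing.Theory Num.Theory.
Local Open Scope ring_scope.

Notation RR := Rdefinitions.R.
Definition CC : numClosedFieldType := complex RR.

(* Conventions.  A polynomial "at stage p" (after p blowups) is an element   *)
(* of {mpoly CC[p.+3]} in the variables                                     *)
(*    X_0 = t,  X_1 = s,  X_(q+2) = e_q   (q = 0..p).                        *)
(* At stage 0 these are t, s, e_0 = u: the input polynomials f, g are       *)
(* elements of {mpoly CC[3]} in the variables (t, s, u).                     *)

Definition vt {n} : 'I_n.+3 := inord 0.
Definition vs {n} : 'I_n.+3 := inord 1.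
Definition ve {n} (q : nat) : 'I_n.+3 := inord q.+2.   (* e_q, for q <= n *)

(* minimum of a list of naturals (0 for the empty list) *)
Definition minseq (l : seq nat) : nat :=
  \big[minn/ \max_(x <- l) x]_(x <- l) x.

(* vanishing order in the variable v of a polynomial: minimal exponent of   *)
(* X_v over the monomials of its support (only used for nonzero h)          *)
Definition mord {n} (v : 'I_n) (h : {mpoly CC[n]}) : nat :=
  minseq [seq (m : 'X_{1..n}) v | m <- msupp h].

(* exact division by X_v ^ w (keeps the monomials divisible by X_v^w; it is *)
(* the exact quotient whenever X_v^w divides h)                             *)
Definition mdivX {n} (v : 'I_n) (w : nat) (h : {mpoly CC[n]}) : {mpoly CC[n]} :=
  \sum_(m <- msupp h | (w <= m v)%N) h@_m *: 'X_[(m - U_(v) *+ w)%MM].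

(* coefficient of s^i t^j of a stage polynomial, as a polynomial in the e_q *)
Definition stcoef {n} (h : {mpoly CC[n.+3]}) (i j : nat) : {mpoly CC[n.+3]} :=
  \sum_(m <- msupp h | (m vs == i) && (m vt == j))
     h@_m *: 'X_[(m - (U_(vs) *+ i + U_(vt) *+ j))%MM].

(* The substitution of the (p+1)-th blowup, from stage p to stage p+1:       *)
(*   e_p |-> e_p e_(p+1),  s |-> s e_(p+1),  other variables unchanged.      *)
Definition blowup_subst (p : nat) : (p.+3).-tuple {mpoly CC[p.+4]} :=
  [tuple (if (i : nat) == 1%N then 'X_(inord 1) * 'X_(inord p.+3)
          else if (i : nat) == p.+2 then 'X_(inord p.+2) * 'X_(inord p.+3)
          else 'X_(inord i)) | i < p.+3].

(* The blowup chain applied to a polynomial of weight w (w = 4, 6, 12 for   *)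
(* f, g, Delta): stage p+1 is obtained from stage p by the substitution     *)
(* above followed by division by e_(p+1)^w.                                  *)
Fixpoint bchain (w : nat) (h : {mpoly CC[3]}) (p : nat) : {mpoly CC[p.+3]} :=
  match p with
  | 0 => h
  | p'.+1 => mdivX (ve p'.+1) w (comp_mpoly (blowup_subst p') (bchain w h p'))
  end.

Definition Disc {n} (f g : {mpoly CC[n]}) : {mpoly CC[n]} :=
  4%:R * f ^+ 3 + 27%:R * g ^+ 2.

(* base change u |-> u^l on stage-0 polynomials (variables t, s, u) *)
Definition bchange (l : nat) (h : {mpoly CC[3]}) : {mpoly CC[3]} :=
  comp_mpoly [tuple (if (i : nat) == 2%N then 'X_i ^+ l else 'X_i) | i < 3] h.

Definition dehom (h : {mpoly CC[3]}) : {mpoly CC[3]} :=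
  comp_mpoly [tuple (if (i : nat) == 0%N then 1 else 'X_i) | i < 3] h.

(* h|_(t=1) lies in the ideal (u,s)^N (monomial criterion) *)
Definition us_ord_ge (h : {mpoly CC[3]}) (N : nat) : Prop :=
  forall m, m \in msupp (dehom h) -> (N <= m (inord 1 : 'I_3) + m (inord 2 : 'I_3))%N.

Definition us_ord_eq (h : {mpoly CC[3]}) (N : nat) : Prop :=
  us_ord_ge h N /\ ~ us_ord_ge h N.+1.

Definition st_homog (h : {mpoly CC[3]}) (d : nat) : Prop :=
  forall m, m \in msupp h -> (m vs + m vt = d)%N.

(* a, b : vanishing orders in s of f, g for generic u (min s-exponent). *)
Definition sord (h : {mpoly CC[3]}) : nat := mord vs h.

(* F_i after p blowups: f_p = s^a sum_i F_i s^i t^(8-a-i) *)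
Definition Fco (f : {mpoly CC[3]}) (p i : nat) : {mpoly CC[p.+3]} :=
  stcoef (bchain 4 f p) (sord f + i) (8 - sord f - i).
Definition Gco (g : {mpoly CC[3]}) (p j : nat) : {mpoly CC[p.+3]} :=
  stcoef (bchain 6 g p) (sord g + j) (12 - sord g - j).

(* mu_(q,i), nu_(q,j): vanishing order in e_q of the coefficients (computed *)
(* at stage q, where e_q is the newest exceptional coordinate)              *)
Definition mu (f : {mpoly CC[3]}) (q i : nat) : nat := mord (ve q) (Fco f q i).
Definition nu (g : {mpoly CC[3]}) (q j : nat) : nat := mord (ve q) (Gco g q j).

Definition condP (f g : {mpoly CC[3]}) (p : nat) : Prop :=
  (exists i, (i < 4 - sord f)%N /\ Fco f 0 i != 0 /\ (mu f p i < 4 - sord f - i)%N)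
  \/ (exists j, (j < 6 - sord g)%N /\ Gco g 0 j != 0 /\ (nu g p j < 6 - sord g - j)%N).

Definition Dfin (D : {mpoly CC[3]}) (Q : nat) : {mpoly CC[Q.+3]} := bchain 12 D Q.
Definition nord (D : {mpoly CC[3]}) (Q q : nat) : nat := mord (ve q) (Dfin D Q).
Definition Dprime (D : {mpoly CC[3]}) (Q : nat) : {mpoly CC[Q.+3]} :=
  foldr (fun q h => mdivX (ve q) (nord D Q q) h) (Dfin D Q) (iota 0 Q.+1).

(* special fiber at B^{p,p+1}: Delta' vanishes on e_p = e_(p+1) = 0, i.e.  *)
(* every monomial of Delta' is divisible by e_p or e_(p+1)                 *)
Definition special_fiber (D : {mpoly CC[3]}) (Q p : nat) : Prop :=
  forall m, m \in msupp (Dprime D Q) -> (0 < m (ve p))%N || (0 < m (ve p.+1))%N.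

Definition eps0 (D : {mpoly CC[3]}) (Q p : nat) : nat :=
  minseq [seq (m : 'X_{1..Q.+3}) (ve p) | m <- msupp (Dprime D Q) & (m : 'X_{1..Q.+3}) (ve p.+1) == 0%N].
Definition eps1 (D : {mpoly CC[3]}) (Q p : nat) : nat :=
  minseq [seq (m : 'X_{1..Q.+3}) (ve p.+1) | m <- msupp (Dprime D Q) & (m : 'X_{1..Q.+3}) (ve p) == 0%N].

(* minimum of a nonempty list of reals *)
Definition rminseq (l : seq RR) : RR := \big[Num.min/ head 0 l]_(x <- l) x.

Definition Mbar (D : {mpoly CC[3]}) (Q p k : nat) (r : RR) : RR :=
  rminseq [seq (k%:R - r) * ((m : 'X_{1..Q.+3}) (ve p))%:R + r * (m (ve p.+1))%:R
          | m <- msupp (Dprime D Q)].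

Definition piecewise_linear (F : RR -> RR) (x0 x1 : RR) : Prop :=
  exists xs : seq RR, [/\ head 0 xs = x0, last 0 xs = x1, sorted <%R xs &
    forall i, (i.+1 < size xs)%N -> exists a b : RR,
      forall x, nth 0 xs i <= x <= nth 0 xs i.+1 -> F x = a * x + b].

Definition concave_on (F : RR -> RR) (x0 x1 : RR) : Prop :=
  forall x y l : RR, x0 <= x <= x1 -> x0 <= y <= x1 -> 0 <= l <= 1 ->
    l * F x + (1 - l) * F y <= F (l * x + (1 - l) * y).

Definition not_locally_linear (F : RR -> RR) (r : RR) : Prop :=
  ~ (exists d : RR, 0 < d /\ exists a b : RR,
        forall x, `|x - r| < d -> F x = a * x + b).

From HB Require Import structures.
From mathcomp Require Import all_boot all_order all_algebra.
From mathcomp Require Import mpoly.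
From mathcomp Require Import Rstruct.
From mathcomp.real_closed Require Import complex.
From mathcomp Require Import ring lra zify.
Import Order.TTheory GRing.Theory Num.Theory.
Local Open Scope ring_scope.
Set Implicit Arguments.
Unset Strict Implicit.
Unset Printing Implicit Defensive.

(* After P blowups the monomial t^a s^b u^c of Delta becomes                  *)
(* t^a s^b prod_q e_q^(c + q b - 12 q); minimality of P (through the weights *)
(* 4, 6, 12 of f, g, Delta) makes all these exponents nonnegative. Under      *)
(* u |-> u^k the exponent of e_(kp+r) is (k - r) times that of e_p plus r     *)
(* times that of e_(p+1). So each monomial z of Delta' gives a line           *)
(* r |-> (k - r) z_p + r z_(p+1), and n_(kp+r) - (k - r) n_p - r n_(p+1) is    *)
(* the value at r of the lower envelope of these lines. The rest is about    *)
(* this envelope: it is concave and piecewise linear, it bends only where two *)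
(* minimal lines of different slopes cross, hence at rational points, and the *)
(* base-changed Delta' vanishes on B^(kp+r, kp+r+1) exactly when no line is   *)
(* minimal at both r/k and (r+1)/k, i.e. when a bend lies strictly between.  *)

(** * Monomial substitutions *)

Definition mimg {n n'} (phi : 'X_{1..n} -> 'X_{1..n'}) (h : {mpoly CC[n]}) :
    {mpoly CC[n']} :=
  \sum_(m <- msupp h) h@_m *: 'X_[phi m].

Section MonomialImage.
Variables (n n' : nat).
Implicit Types (h : {mpoly CC[n]}) (phi psi : 'X_{1..n} -> 'X_{1..n'}).

Lemma mcoeff_mimg phi h z :
  (mimg phi h)@_z = \sum_(m <- msupp h) h@_m * (phi m == z)%:R.
Proof. by rewrite /mimg raddf_sum /=; apply: eq_bigr => m _; rewrite mcoeffZ mcoeffX. Qed.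

Lemma mcoeff_mimg_inj phi h m0 :
  {in msupp h &, injective phi} -> m0 \in msupp h -> (mimg phi h)@_(phi m0) = h@_m0.
Proof.
move=> inj m0s; rewrite mcoeff_mimg (bigD1_seq m0) ?msupp_uniq //= eqxx mulr1.
rewrite big1_seq ?addr0 // => m /andP [ne ms].
case: eqP => [/(inj _ _ ms m0s) e|_]; last by rewrite mulr0.
by rewrite e eqxx in ne.
Qed.

Lemma msupp_mimgP phi h z :
  {in msupp h &, injective phi} ->
  (z \in msupp (mimg phi h)) <-> exists2 m, m \in msupp h & z = phi m.
Proof.
move=> inj; split; last first.
  by case=> m ms ->; rewrite mcoeff_msupp mcoeff_mimg_inj -?mcoeff_msupp.
have [/hasP [m ms /eqP <-] _|/hasPn phi_neq] := boolP (has (fun m => phi m == z) (msupp h)).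
  by exists m.
rewrite mcoeff_msupp mcoeff_mimg big1_seq ?eqxx // => m /andP [_ ms].
by rewrite (negbTE (phi_neq m ms)) mulr0.
Qed.

Lemma eq_mimg phi psi h : {in msupp h, phi =1 psi} -> mimg phi h = mimg psi h.
Proof. by move=> e; apply: eq_big_seq => m ms; rewrite e. Qed.

Lemma mimg_id (h : {mpoly CC[n]}) : mimg id h = h.
Proof. by rewrite {2}[h]mpolyE. Qed.

Lemma comp_mpoly_mimg k (lq : n'.-tuple {mpoly CC[k]}) phi
    (chi : 'X_{1..n'} -> 'X_{1..k}) h :
  (forall m, comp_mpoly lq 'X_[m] = 'X_[chi m]) ->
  comp_mpoly lq (mimg phi h) = mimg (chi \o phi) h.
Proof. by move=> H; rewrite /mimg raddf_sum /=; apply: eq_bigr => m _; rewrite comp_mpolyZ H. Qed.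

End MonomialImage.

Lemma mnm1_muln_lep n (v : 'I_n) w (m : 'X_{1..n}) : (w <= m v)%N -> (U_(v) *+ w <= m)%MM.
Proof.
move=> h; apply/mnm_lepP => i; rewrite mulmnE mnm1E.
by case: eqP => [<-|_]; rewrite ?mul1n ?mul0n.
Qed.

Lemma eqm_subr n (a b c : 'X_{1..n}) : (b <= a)%MM -> (a == c + b)%MM = (a - b == c)%MM.
Proof.
by move=> ba; apply/eqP/eqP => [->|<-]; [rewrite addmK | rewrite submK].
Qed.

Lemma mcoeff_mdivX n (v : 'I_n) w (h : {mpoly CC[n]}) z :
  (mdivX v w h)@_z = h@_(z + U_(v) *+ w)%MM.
Proof.
rewrite /mdivX raddf_sum /= -[in RHS](mimg_id h) mcoeff_mimg big_mkcond /=.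
apply: eq_bigr => m _; case: ifP => h_le.
  by rewrite mcoeffZ mcoeffX -eqm_subr ?mnm1_muln_lep // eq_sym.
suff /negbTE -> : m != (z + U_(v) *+ w)%MM by rewrite mulr0.
apply: contraFneq h_le => ->; rewrite mnmDE mulmnE mnm1E eqxx mul1n.
exact: leq_addl.
Qed.

Lemma mdivX_mimg n n' (v : 'I_n') w (phi : 'X_{1..n} -> 'X_{1..n'}) (h : {mpoly CC[n]}) :
  (forall m, m \in msupp h -> (w <= phi m v)%N) ->
  mdivX v w (mimg phi h) = mimg (fun m => phi m - U_(v) *+ w)%MM h.
Proof.
move=> H; apply/mpolyP => z; rewrite mcoeff_mdivX !mcoeff_mimg.
apply: eq_big_seq => m ms; congr (_ * _%:R).
by rewrite eqm_subr // mnm1_muln_lep // H.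
Qed.

Lemma prod_mpolyX_exp n k (a : 'I_n -> 'X_{1..k}) (m : 'X_{1..n}) :
  \prod_(i < n) ('X_[a i] : {mpoly CC[k]}) ^+ (m i)
  = 'X_[\big[mnm_add/mnm0]_(i < n) mnm_muln (a i) (m i)].
Proof.
rewrite (big_morph (fun m : 'X_{1..k} => ('X_[m] : {mpoly CC[k]}))
  (@mpolyXD _ _) (@mpolyX0 _ _)).
by apply: eq_bigr => i _; rewrite mpolyXn.
Qed.

Lemma mnm_sum_mulnE n k (a : 'I_n -> 'X_{1..k}) (m : 'X_{1..n}) j :
  (\big[mnm_add/mnm0]_(i < n) mnm_muln (a i) (m i)) j = (\sum_(i < n) a i j * m i)%N.
Proof. by rewrite mnm_sumE; apply: eq_bigr => i _; rewrite mulmnE. Qed.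

Lemma sum_eqn_mul n (F : 'I_n.+1 -> nat) (j : nat) : (j < n.+1)%N ->
  (\sum_(i < n.+1) ((i : nat) == j) * F i)%N = F (inord j).
Proof.
move=> jn; rewrite (bigD1 (inord j)) //= inordK // eqxx mul1n big1 ?addn0 //.
move=> i ne; case: eqP => [e|_]; last by rewrite mul0n.
by move: ne; rewrite -e inord_val eqxx.
Qed.

Lemma sum_eqn_mul_out n (F : 'I_n -> nat) (j : nat) : (n <= j)%N ->
  (\sum_(i < n) ((i : nat) == j) * F i)%N = 0%N.
Proof.
move=> jn; rewrite big1 // => i _; case: eqP => [e|_]; last by rewrite mul0n.
by move: (ltn_ord i); rewrite e ltnNge jn.
Qed.

Lemma inord_eq n (i : nat) (j : 'I_n.+1) : (i <= n)%N -> (inord i == j) = (i == j).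
Proof. by move=> h; rewrite -(inj_eq val_inj) /= inordK. Qed.

(** * The blowup substitution on monomials *)

Definition blowup_subst_exp (p : nat) (i : 'I_p.+3) : 'X_{1..p.+4} :=
  if (i : nat) == 1%N then (U_(inord 1) + U_(inord p.+3))%MM
  else if (i : nat) == p.+2 then (U_(inord p.+2) + U_(inord p.+3))%MM
  else U_(inord i)%MM.

Lemma tnth_blowup_subst p i : tnth (blowup_subst p) i = 'X_[blowup_subst_exp i].
Proof.
rewrite /blowup_subst tnth_mktuple /blowup_subst_exp.
by case: ifP => _; [rewrite mpolyXD | case: ifP => _; rewrite ?mpolyXD].
Qed.

Lemma blowup_subst_expE p (i : 'I_p.+3) (j : 'I_p.+4) :
  blowup_subst_exp i j = (((i : nat) == j)
     + (((i : nat) == 1%N) || ((i : nat) == p.+2)) * ((j : nat) == p.+3))%N.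
Proof.
have ip : (i <= p.+3)%N by apply: ltnW.
rewrite /blowup_subst_exp; case: ifP => [/eqP e1|n1].
  by rewrite mnmDE !mnm1E !inord_eq // e1 /= mul1n (eq_sym (j : nat)).
case: ifP => [/eqP e2|n2].
  by rewrite mnmDE !mnm1E !inord_eq // e2 /= mul1n (eq_sym (j : nat)).
by rewrite mnm1E inord_eq //= addn0.
Qed.

(* s^b e_p^c becomes s^b e_p^c e_(p+1)^(b+c) *)
Definition blowup_mnm (p : nat) (m : 'X_{1..p.+3}) : 'X_{1..p.+4} :=
  [multinom (if (j : nat) < p.+3 then m (inord j) else (m (inord 1) + m (inord p.+2))%N)
   | j < p.+4].

Lemma comp_blowup_subst_X p (m : 'X_{1..p.+3}) :
  comp_mpoly (blowup_subst p) 'X_[m] = 'X_[blowup_mnm m].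
Proof.
rewrite comp_mpolyX; under eq_bigr do rewrite tnth_blowup_subst.
rewrite prod_mpolyX_exp; congr 'X_[_]; apply/mnmP => j; rewrite mnm_sum_mulnE mnmE.
under eq_bigr do rewrite blowup_subst_expE mulnDl.
rewrite big_split /=; case: ifP => jl.
  by rewrite sum_eqn_mul // big1 ?addn0 // => i _; rewrite (ltn_eqF jl) muln0.
have jE : (j : nat) = p.+3 by apply/eqP; rewrite eqn_leq -ltnS ltn_ord leqNgt jl.
rewrite sum_eqn_mul_out ?jE ?leqnn // add0n eqxx.
under eq_bigr do rewrite muln1.
have -> : (\sum_(i < p.+3) ((((i : nat) == 1%N) || ((i : nat) == p.+2)) * m i))%N =
    (\sum_(i < p.+3) (((i : nat) == 1%N) * m i)
     + \sum_(i < p.+3) (((i : nat) == p.+2) * m i))%N.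
  rewrite -big_split /=; apply: eq_bigr => i _.
  by case: eqP => [->|_]; case: eqP => [e|_] //; rewrite ?mul0n ?mul1n ?add0n ?addn0.
by rewrite !sum_eqn_mul.
Qed.

Definition bchange_mnm (l : nat) (m : 'X_{1..3}) : 'X_{1..3} :=
  [multinom (if (j : nat) == 2%N then (m j * l)%N else m j) | j < 3].

Lemma comp_bchange_X l (m : 'X_{1..3}) :
  comp_mpoly [tuple (if (i : nat) == 2%N then 'X_i ^+ l else 'X_i) | i < 3] 'X_[m]
  = ('X_[bchange_mnm l m] : {mpoly CC[3]}).
Proof.
have tE (i : 'I_3) : tnth [tuple (if (i : nat) == 2%N then 'X_i ^+ l else 'X_i) | i < 3] i
    = ('X_[U_(i) *+ (if (i : nat) == 2%N then l else 1%N)] : {mpoly CC[3]}).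
  by rewrite tnth_mktuple; case: ifP => _; rewrite -mpolyXn ?expr1.
rewrite comp_mpolyX; under eq_bigr do rewrite tE.
rewrite prod_mpolyX_exp; congr 'X_[_]; apply/mnmP => j; rewrite mnm_sum_mulnE mnmE.
rewrite (bigD1 j) //= mulmnE mnm1E eqxx mul1n big1 ?addn0.
  by case: ifP => _; rewrite ?mul1n // mulnC.
by move=> i ne; rewrite mulmnE mnm1E (negbTE ne) mul0n.
Qed.

Lemma bchangeE l (h : {mpoly CC[3]}) : bchange l h = mimg (bchange_mnm l) h.
Proof. by rewrite /bchange -{1}[h](@mimg_id 3) (comp_mpoly_mimg _ _ (@comp_bchange_X l)). Qed.

Lemma Disc_bchange l (f g : {mpoly CC[3]}) :
  Disc (bchange l f) (bchange l g) = mimg (bchange_mnm l) (Disc f g).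
Proof.
rewrite -bchangeE /Disc /bchange rmorphD (rmorphM _ 4%:R (f ^+ 3)).
by rewrite (rmorphM _ 27%:R (g ^+ 2)) !rmorphXn !rmorph_nat.
Qed.

(** * Monomials through the blowup chain *)

Lemma mnm3_eq (m m' : 'X_{1..3}) :
  m vt = m' vt -> m vs = m' vs -> m (ve 0) = m' (ve 0) -> m = m'.
Proof.
have mE (z : 'X_{1..3}) (j : 'I_3) :
    z j = if (j : nat) == 0%N then z vt else if (j : nat) == 1%N then z vs else z (ve 0).
  by case: j => [[|[|[|j]]] jl] //=; congr (z _); apply: val_inj; rewrite /= inordK.
by move=> e0 e1 e2; apply/mnmP => j; rewrite !(mE _ j) e0 e1 e2.
Qed.

Lemma bchange_mnm_vs l m : bchange_mnm l m vs = m vs.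
Proof. by rewrite mnmE /vs inordK. Qed.

Lemma bchange_mnm_ve0 l m : bchange_mnm l m (ve 0) = (m (ve 0) * l)%N.
Proof. by rewrite mnmE /ve inordK. Qed.

Lemma bchange_mnm_inj l : (0 < l)%N -> injective (bchange_mnm l).
Proof.
move=> l0 m m' e; apply: mnm3_eq.
- by have := congr1 (fun z : 'X_{1..3} => z vt) e; rewrite !mnmE /vt inordK.
- by rewrite -(bchange_mnm_vs l m) e bchange_mnm_vs.
have := congr1 (fun z : 'X_{1..3} => z (ve 0)) e; rewrite !bchange_mnm_ve0.
by move/eqP; rewrite eqn_mul2r eqn0Ngt l0 => /eqP.
Qed.

(* Weighted degree of t^a s^b u^c in which s has weight Q. A monomial of a    *)
(* polynomial of weight w survives Q blowups exactly when it is >= w Q, and  *)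
(* then its image has e_q-exponent eexp w m q.                              *)
Definition wdeg (Q : nat) (m : 'X_{1..3}) : nat := (m (ve 0) + Q * m vs)%N.

Definition survives (w Q : nat) (m : 'X_{1..3}) : bool := (w * Q <= wdeg Q m)%N.

Definition eexp (w : nat) (m : 'X_{1..3}) (q : nat) : nat := (wdeg q m - w * q)%N.

Definition chain_mnm (w Q : nat) (m : 'X_{1..3}) : 'X_{1..Q.+3} :=
  [multinom (if (j : nat) == 0%N then m vt else if (j : nat) == 1%N then m vs
             else eexp w m (j - 2)) | j < Q.+3].

Lemma survives_le w Q q m : (q <= Q)%N -> survives w Q m -> survives w q m.
Proof.
rewrite /survives /wdeg; move: (m (ve 0)) (m vs) => c b qQ.
have [wb _|bw] := leqP w b.
  by apply: leq_trans (leq_addl _ _); rewrite mulnC leq_mul2l wb orbT.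
have l1 : (q * (w - b) <= Q * (w - b))%N by rewrite leq_mul2r qQ orbT.
have e1 : (w * Q = Q * b + Q * (w - b))%N by rewrite -mulnDr subnKC ?(ltnW bw) // mulnC.
have e2 : (w * q = q * b + q * (w - b))%N by rewrite -mulnDr subnKC ?(ltnW bw) // mulnC.
lia.
Qed.

Lemma chain_mnm_vt w Q m : chain_mnm w Q m vt = m vt.
Proof. by rewrite mnmE /vt inordK. Qed.

Lemma chain_mnm_vs w Q m : chain_mnm w Q m vs = m vs.
Proof. by rewrite mnmE /vs inordK. Qed.

Lemma chain_mnm_ve w Q m q : (q <= Q)%N -> chain_mnm w Q m (ve q) = eexp w m q.
Proof. by move=> qQ; rewrite mnmE /ve inordK ?ltnS //= subn2. Qed.

Lemma chain_mnm_inj w Q : injective (chain_mnm w Q).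
Proof.
move=> m m' e; apply: mnm3_eq.
- by rewrite -(chain_mnm_vt w Q m) e chain_mnm_vt.
- by rewrite -(chain_mnm_vs w Q m) e chain_mnm_vs.
have := chain_mnm_ve w m (leq0n Q); rewrite e chain_mnm_ve //.
by rewrite /eexp /wdeg !(mul0n, muln0, addn0, subn0).
Qed.

Lemma chain_mnm0 w m : chain_mnm w 0 m = m.
Proof.
apply: mnm3_eq; rewrite ?chain_mnm_vt ?chain_mnm_vs //.
by rewrite chain_mnm_ve // /eexp /wdeg !(mul0n, muln0, addn0, subn0).
Qed.

Lemma chain_mnmS w Q m : survives w Q.+1 m ->
  (blowup_mnm (chain_mnm w Q m) - U_(ve Q.+1) *+ w)%MM = chain_mnm w Q.+1 m.
Proof.
move=> sv; have := survives_le (leqnSn Q) sv; move: sv; rewrite /survives => sv sv0.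
apply/mnmP => j; rewrite mnmBE mulmnE mnm1E [RHS]mnmE [blowup_mnm _ _]mnmE.
rewrite /ve inord_eq // eq_sym; case: ifP => jl.
  by rewrite (ltn_eqF jl) mul0n subn0 mnmE inordK.
have -> : (j : nat) = Q.+3 by apply/eqP; rewrite eqn_leq -ltnS ltn_ord leqNgt jl.
rewrite eqxx mul1n /=.
rewrite -[inord 1]/(vs : 'I_Q.+3) -[inord Q.+2]/(ve Q : 'I_Q.+3) chain_mnm_vs chain_mnm_ve //.
move: sv sv0; rewrite /eexp /wdeg !mulSn !mulnS; lia.
Qed.

Lemma bchain_mimg w Q n0 (phi : 'X_{1..n0} -> 'X_{1..3}) (h : {mpoly CC[n0]}) :
  (forall m, m \in msupp h -> survives w Q (phi m)) ->
  bchain w (mimg phi h) Q = mimg (chain_mnm w Q \o phi) h.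
Proof.
elim: Q => [|Q IH] H; first by apply: eq_mimg => m _; rewrite /= chain_mnm0.
rewrite /= IH; last by move=> m ms; apply: survives_le (H m ms).
rewrite (comp_mpoly_mimg _ _ (@comp_blowup_subst_X Q)) mdivX_mimg.
  by apply: eq_mimg => m ms; rewrite /= chain_mnmS // H.
move=> m ms; have sv := H m ms; have sv0 := survives_le (leqnSn Q) sv.
rewrite mnmE /ve inordK // ltnn -[inord 1]/(vs : 'I_Q.+3) -[inord Q.+2]/(ve Q : 'I_Q.+3).
rewrite /= chain_mnm_vs chain_mnm_ve // /eexp.
move: sv sv0; rewrite /survives /wdeg mulSn mulnS; lia.
Qed.

(** * Vanishing orders *)

Lemma minseq_le (l : seq nat) z : z \in l -> (minseq l <= z)%N.
Proof.
rewrite /minseq; move: (\max_(x <- l) x) => i; elim: l => [//|a l IH].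
by rewrite inE big_cons geq_min => /orP [/eqP ->|/IH ->]; rewrite ?leqnn ?orbT.
Qed.

Lemma minseq_mem (l : seq nat) : l != [::] -> minseq l \in l.
Proof.
have big_mem i : \big[minn/i]_(w <- l) w \in i :: l.
  elim: l => [|a l IH]; first by rewrite big_nil mem_head.
  rewrite big_cons /minn; case: ifP => _; first by rewrite !inE eqxx orbT.
  by move: IH; rewrite !inE => /orP [->|->]; rewrite ?orbT.
case: l big_mem => [//|a l] /(_ (\max_(x <- a :: l) x)) + _; rewrite inE.
case/orP => [/eqP e|//]; rewrite -/(minseq _) in e.
have -> : minseq (a :: l) = a.
  apply/eqP; rewrite eqn_leq minseq_le ?mem_head //= e.
  exact: leq_bigmax_seq (mem_head a l) _.
exact: mem_head.
Qed.

Lemma mord_le n (v : 'I_n) (h : {mpoly CC[n]}) m : m \in msupp h -> (mord v h <= m v)%N.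
Proof. by move=> ms; apply/minseq_le/map_f. Qed.

Lemma mord_ex n (v : 'I_n) (h : {mpoly CC[n]}) : h != 0 ->
  exists2 m, m \in msupp h & m v = mord v h.
Proof.
move=> hn0; have ne : [seq (m : 'X_{1..n}) v | m <- msupp h] != [::].
  by rewrite -size_eq0 size_map size_eq0 msupp_eq0.
by have /mapP [m ms e] := minseq_mem ne; exists m.
Qed.

Lemma vs_ve n q : (q <= n)%N -> ((vs : 'I_n.+3) == ve q) = false.
Proof. by move=> qn; rewrite /vs /ve inord_eq //= inordK // ltnS ltnS. Qed.

Lemma vt_ve n q : (q <= n)%N -> ((vt : 'I_n.+3) == ve q) = false.
Proof. by move=> qn; rewrite /vt /ve inord_eq //= inordK // ltnS ltnS. Qed.

Definition st_part n (m : 'X_{1..n.+3}) : 'X_{1..n.+3} :=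
  (U_(vs) *+ m vs + U_(vt) *+ m vt)%MM.

Lemma st_part_le n (m m' : 'X_{1..n.+3}) :
  m' vs = m vs -> m' vt = m vt -> (st_part m <= m')%MM.
Proof.
move=> es et; apply/mnm_lepP => k; rewrite mnmDE !mulmnE !mnm1E.
have nts : ((vt : 'I_n.+3) == vs) = false by rewrite /vs /vt inord_eq //= inordK.
case: (eqVneq vs k) => [<-|ns]; first by rewrite nts mul1n mul0n addn0 es.
case: (eqVneq vt k) => [<-|nt]; first by rewrite mul1n mul0n add0n et.
by rewrite /= !mul0n.
Qed.

Lemma msupp_stcoef n (h : {mpoly CC[n.+3]}) m : m \in msupp h ->
  (m - st_part m)%MM \in msupp (stcoef h (m vs) (m vt)).
Proof.
move=> ms; rewrite mcoeff_msupp.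
suff -> : (stcoef h (m vs) (m vt))@_(m - st_part m) = h@_m by rewrite -mcoeff_msupp.
rewrite /stcoef raddf_sum /= -[in RHS](mimg_id h) mcoeff_mimg big_mkcond /=.
apply: eq_bigr => m' _; case: ifP => /andP => [[/eqP es /eqP et]|m'_out].
  rewrite mcoeffZ mcoeffX -/(st_part m); congr (_ * _%:R).
  have ec : st_part m' = st_part m by rewrite /st_part es et.
  by rewrite -ec -eqm_subr ?ec ?submK //; apply: st_part_le.
case: (eqVneq m' m) => [e|ne]; last by rewrite mulr0.
by exfalso; apply: m'_out; rewrite e !eqxx.
Qed.

Lemma st_part_ve n (m : 'X_{1..n.+3}) q : (q <= n)%N -> (m - st_part m)%MM (ve q) = m (ve q).
Proof.
by move=> qn; rewrite mnmBE mnmDE !mulmnE !mnm1E vs_ve // vt_ve // !mul0n subn0.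
Qed.

(* The image of t^a s^b u^c at stage q lies in the coefficient of index       *)
(* b - sord h with e_q-exponent eexp w m q, so the order bound at stage q is *)
(* exactly survival through blowup q + 1.                                    *)
Lemma survives_of_orders w d (h : {mpoly CC[3]}) P :
  st_homog h d ->
  (forall q, (q < P)%N -> forall i, (i < w - sord h)%N ->
     stcoef (bchain w h 0) (sord h + i) (d - sord h - i) != 0 ->
     (w - sord h - i <= mord (ve q) (stcoef (bchain w h q) (sord h + i) (d - sord h - i)))%N) ->
  forall m, m \in msupp h -> survives w P m.
Proof.
move=> hom H; suff: forall q, (q <= P)%N -> forall m, m \in msupp h -> survives w q m.
  by apply.
elim => [|q IH] qP m ms; first by rewrite /survives muln0.
have svq := IH (ltnW qP) m ms.
have [wb|bw] := leqP w (m vs).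
  by apply: leq_trans (leq_addl _ _); rewrite mulnC leq_mul2l wb orbT.
have am : (sord h <= m vs)%N by apply: mord_le.
have hm := hom m ms.
have ei : (sord h + (m vs - sord h) = m vs)%N by rewrite subnKC.
have ej : (d - sord h - (m vs - sord h) = m vt)%N by lia.
have il : (m vs - sord h < w - sord h)%N by lia.
have coef_nz : stcoef (bchain w h 0) (m vs) (m vt) != 0.
  by apply/eqP => e; have := msupp_stcoef ms; rewrite /= e msupp0.
have := H q qP _ il; rewrite ei ej => /(_ coef_nz) ord_ge.
have bE : bchain w h q = mimg (chain_mnm w q) h.
  by rewrite -{1}[h](@mimg_id 3) bchain_mimg // => m'; apply: IH (ltnW qP) m'.
have mqs : chain_mnm w q m \in msupp (bchain w h q).
  by rewrite bE; apply/msupp_mimgP; [move=> ? ? _ _; apply: chain_mnm_inj | exists m].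
have := mord_le (ve q) (msupp_stcoef mqs).
rewrite chain_mnm_vs chain_mnm_vt st_part_ve // chain_mnm_ve // => /(leq_trans ord_ge).
move: svq; rewrite /survives /eexp /wdeg mulnS mulSn; lia.
Qed.

Definition wdeg_ge (P c : nat) (h : {mpoly CC[3]}) : Prop :=
  forall m, m \in msupp h -> (c <= wdeg P m)%N.

Lemma wdeg_ge_le P a b h : (b <= a)%N -> wdeg_ge P a h -> wdeg_ge P b h.
Proof. by move=> ba H m ms; apply: leq_trans ba (H m ms). Qed.

Lemma wdeg_geD P a p q : wdeg_ge P a p -> wdeg_ge P a q -> wdeg_ge P a (p + q).
Proof. by move=> hp hq m /msuppD_le; rewrite mem_cat => /orP [/hp|/hq]. Qed.

Lemma wdeg_geM P a b p q : wdeg_ge P a p -> wdeg_ge P b q -> wdeg_ge P (a + b) (p * q).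
Proof.
move=> hp hq m /msuppM_le /allpairsP [[m1 m2] /= [m1s m2s ->]].
by have := hp m1 m1s; have := hq m2 m2s; rewrite /wdeg !mnmDE mulnDr; lia.
Qed.

Lemma wdeg_geX P a p n : wdeg_ge P a p -> wdeg_ge P (a * n) (p ^+ n).
Proof.
move=> hp; elim: n => [|n IH]; first by move=> m _; rewrite muln0.
by rewrite exprS mulnS; apply: wdeg_geM.
Qed.

Lemma wdeg_ge_Disc P f g :
  wdeg_ge P (4 * P) f -> wdeg_ge P (6 * P) g -> wdeg_ge P (12 * P) (Disc f g).
Proof.
move=> hf hg; have cst0 c : wdeg_ge P 0 c by [].
apply: wdeg_geD.
  by apply: (wdeg_ge_le _ (wdeg_geM (cst0 _) (wdeg_geX (n := 3) hf))); lia.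
by apply: (wdeg_ge_le _ (wdeg_geM (cst0 _) (wdeg_geX (n := 2) hg))); lia.
Qed.

Lemma Disc_survives (f g : {mpoly CC[3]}) (P : nat) :
  st_homog f 8 -> st_homog g 12 -> (forall q, (q < P)%N -> ~ condP f g q) ->
  forall m, m \in msupp (Disc f g) -> survives 12 P m.
Proof.
move=> Hf Hg HPmin; apply: wdeg_ge_Disc.
  apply: (survives_of_orders Hf) => q qP i il nz; rewrite leqNgt; apply/negP => lt.
  by apply: (HPmin q qP); left; exists i.
apply: (survives_of_orders Hg) => q qP i il nz; rewrite leqNgt; apply/negP => lt.
by apply: (HPmin q qP); right; exists i.
Qed.

(** * The monomials of Delta' *)

Definition esum (Q : nat) (N : nat -> nat) (l : seq nat) : 'X_{1..Q.+3} :=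
  \big[mnm_add/mnm0]_(q <- l) mnm_muln U_(ve q) (N q).

Lemma ve_eq Q q q' : (q <= Q)%N -> (q' <= Q)%N -> ((ve q : 'I_Q.+3) == ve q') = (q == q').
Proof. by move=> h h'; rewrite /ve inord_eq //= inordK // ltnS ltnS. Qed.

Section ExponentSum.
Variables (Q : nat) (N : nat -> nat).
Implicit Type l : seq nat.

Lemma esumE l j : esum Q N l j = (\sum_(q <- l) ((ve q : 'I_Q.+3) == j) * N q)%N.
Proof. by rewrite mnm_sumE; apply: eq_bigr => q _; rewrite mulmnE mnm1E. Qed.

Lemma esum_ve l q : uniq l -> all (fun q => q <= Q)%N l -> (q <= Q)%N ->
  esum Q N l (ve q) = ((q \in l) * N q)%N.
Proof.
move=> + + qQ; rewrite esumE; elim: l => [|a l IH]; first by rewrite big_nil.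
rewrite big_cons /= => /andP [al ul] /andP [aQ alQ].
rewrite IH // ve_eq // inE; case: (eqVneq a q) => [<-|ne].
  by rewrite (negbTE al) /= mul0n addn0.
by rewrite mul0n add0n.
Qed.

Lemma esum_st l (v : 'I_Q.+3) : v \in [:: vs; vt] -> all (fun q => q <= Q)%N l ->
  esum Q N l v = 0%N.
Proof.
move=> v_st l_le; rewrite esumE big1_seq // => q /andP [_ ql].
have qQ := allP l_le q ql.
by move: v_st; rewrite !inE => /orP [] /eqP ->; rewrite eq_sym ?vs_ve ?vt_ve ?mul0n.
Qed.

Lemma foldr_mdivX_mimg l n0 (phi : 'X_{1..n0} -> 'X_{1..Q.+3}) h0 :
  uniq l -> all (fun q => q <= Q)%N l ->
  (forall m, m \in msupp h0 -> forall q, q \in l -> (N q <= phi m (ve q))%N) ->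
  foldr (fun q h => mdivX (ve q) (N q) h) (mimg phi h0) l
  = mimg (fun m => phi m - esum Q N l)%MM h0.
Proof.
elim: l => [|a l IH] ul l_le H.
  by apply: eq_mimg => m _; rewrite /esum big_nil subm0.
move: ul l_le => /= /andP [anl ul] /andP [aQ alQ].
rewrite IH //; last by move=> m ms q ql; apply: H => //; rewrite inE ql orbT.
rewrite mdivX_mimg.
  by apply: eq_mimg => m _; rewrite submDA /esum big_cons addmC.
move=> m ms; rewrite mnmBE esum_ve // (negbTE anl) mul0n subn0.
by apply: H => //; rewrite mem_head.
Qed.

End ExponentSum.

Section DeltaPrime.
Variables (D : {mpoly CC[3]}) (phi : 'X_{1..3} -> 'X_{1..3}) (Q : nat).
Hypothesis phi_inj : injective phi.
Hypothesis D_neq0 : D != 0.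
Hypothesis D_survives : forall m, m \in msupp D -> survives 12 Q (phi m).

Local Notation Dphi := (mimg phi D).

Lemma Dfin_mimg : Dfin Dphi Q = mimg (chain_mnm 12 Q \o phi) D.
Proof. exact: bchain_mimg. Qed.

Lemma msupp_DfinP z :
  z \in msupp (Dfin Dphi Q) <-> exists2 m, m \in msupp D & z = chain_mnm 12 Q (phi m).
Proof. by rewrite Dfin_mimg; apply: msupp_mimgP => m m' _ _ /chain_mnm_inj /phi_inj. Qed.

Lemma nord_le q m : (q <= Q)%N -> m \in msupp D -> (nord Dphi Q q <= eexp 12 (phi m) q)%N.
Proof.
move=> qQ ms; rewrite /nord -(chain_mnm_ve 12 (phi m) qQ); apply: mord_le.
by apply/msupp_DfinP; exists m.
Qed.

Lemma nord_ex q : (q <= Q)%N -> exists2 m, m \in msupp D & eexp 12 (phi m) q = nord Dphi Q q.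
Proof.
move=> qQ; have [m0 m0s] : exists m0, m0 \in msupp D.
  by move: D_neq0; rewrite -msupp_eq0; case: (msupp D) => // a l _; exists a; rewrite mem_head.
have Dfin_neq0 : Dfin Dphi Q != 0.
  have : chain_mnm 12 Q (phi m0) \in msupp (Dfin Dphi Q) by apply/msupp_DfinP; exists m0.
  by apply: contraTneq => ->; rewrite msupp0.
have [z /msupp_DfinP [m ms ->] e] := mord_ex (ve q) Dfin_neq0.
by exists m => //; rewrite -(chain_mnm_ve 12 (phi m) qQ).
Qed.

Definition dprime_mnm (m : 'X_{1..3}) : 'X_{1..Q.+3} :=
  (chain_mnm 12 Q (phi m) - esum Q (nord Dphi Q) (iota 0 Q.+1))%MM.

Lemma iota_le : all (fun q => q <= Q)%N (iota 0 Q.+1).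
Proof. by apply/allP => q; rewrite mem_iota add0n ltnS. Qed.

Lemma Dprime_mimg : Dprime Dphi Q = mimg dprime_mnm D.
Proof.
rewrite /Dprime Dfin_mimg foldr_mdivX_mimg ?iota_uniq ?iota_le // => m ms q.
by rewrite mem_iota add0n ltnS => qQ; rewrite /= chain_mnm_ve // nord_le.
Qed.

Lemma dprime_mnm_ve m q : (q <= Q)%N ->
  dprime_mnm m (ve q) = (eexp 12 (phi m) q - nord Dphi Q q)%N.
Proof.
move=> qQ; rewrite mnmBE esum_ve ?iota_uniq ?iota_le //.
by rewrite mem_iota add0n ltnS qQ mul1n chain_mnm_ve.
Qed.

Lemma dprime_mnm_vs m : dprime_mnm m vs = phi m vs.
Proof. by rewrite mnmBE esum_st ?iota_le ?inE ?eqxx // subn0 chain_mnm_vs. Qed.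

Lemma dprime_mnm_vt m : dprime_mnm m vt = phi m vt.
Proof. by rewrite mnmBE esum_st ?iota_le ?inE ?eqxx ?orbT // subn0 chain_mnm_vt. Qed.

Lemma dprime_mnm_inj : {in msupp D &, injective dprime_mnm}.
Proof.
move=> m m' ms m's e; apply: phi_inj; apply: mnm3_eq.
- by rewrite -dprime_mnm_vt e dprime_mnm_vt.
- by rewrite -dprime_mnm_vs e dprime_mnm_vs.
have := congr1 (fun z : 'X_{1..Q.+3} => z (ve 0)) e; rewrite /= !dprime_mnm_ve //.
have := nord_le (leq0n Q) ms; have := nord_le (leq0n Q) m's.
rewrite /eexp /wdeg !(mul0n, muln0, addn0, subn0); lia.
Qed.

Lemma msupp_DprimeP z :
  z \in msupp (Dprime Dphi Q) <-> exists2 m, m \in msupp D & z = dprime_mnm m.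
Proof. by rewrite Dprime_mimg; apply: msupp_mimgP dprime_mnm_inj. Qed.

End DeltaPrime.

(* This interpolation is where n_(kp+r) = (k-r) n_p + r n_(p+1) + ... comes *)
(* from.                                                                     *)
Lemma eexp_bchange w k r p m : (r <= k)%N -> survives w p.+1 m ->
  eexp w (bchange_mnm k m) (k * p + r) = ((k - r) * eexp w m p + r * eexp w m p.+1)%N.
Proof.
move=> rk sv1; have sv0 := survives_le (leqnSn p) sv1; move: sv0 sv1.
rewrite /eexp /survives /wdeg bchange_mnm_ve0 bchange_mnm_vs.
move: (m (ve 0)) (m vs) => c b sv0 sv1.
have [t ->] : exists t, k = (t + r)%N by exists (k - r)%N; rewrite subnK.
rewrite addnK; have eA := subnK sv0; have eB := subnK sv1.
move: (c + p * b - w * p)%N (c + p.+1 * b - w * p.+1)%N eA eB => A B eA eB.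
suff <- : (t * A + r * B + w * ((t + r) * p + r) = c * (t + r) + ((t + r) * p + r) * b)%N.
  by rewrite addnK.
have : (t * (A + w * p) + r * (B + w * p.+1) = c * (t + r) + ((t + r) * p + r) * b)%N.
  by rewrite eA eB -(addn1 p) !mulnDr !mulnDl ?muln1; lia.
by rewrite -(addn1 p) !mulnDr !mulnDl ?muln1; lia.
Qed.

Lemma survives_bchange w k Q m : survives w Q m -> survives w (k * Q) (bchange_mnm k m).
Proof.
rewrite /survives /wdeg bchange_mnm_ve0 bchange_mnm_vs => h.
have := leq_mul (leqnn k) h; rewrite mulnDr.
by rewrite mulnCA (mulnC (m (ve 0))) -mulnA.
Qed.

(** * Lower envelopes of lines *)

Lemma seq_argmin (T : eqType) (R : realDomainType) (F : T -> R) (l : seq T) :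
  l != [::] -> exists2 m, m \in l & forall n, n \in l -> F m <= F n.
Proof.
elim: l => [//|a l IH] _; have [->|/IH [m ml Hm]] := eqVneq l [::].
  by exists a; rewrite ?mem_seq1 // => n; rewrite mem_seq1 => /eqP ->.
have [Fam|Fma] := leP (F a) (F m).
  exists a; first exact: mem_head.
  by move=> n; rewrite inE => /orP [/eqP ->//|/Hm]; apply: le_trans.
exists m; first by rewrite inE ml orbT.
by move=> n; rewrite inE => /orP [/eqP ->|/Hm //]; apply: ltW.
Qed.

Lemma seq_pos_lbound (R : realDomainType) (l : seq R) :
  (forall z, z \in l -> 0 < z) -> exists2 d, 0 < d & forall z, z \in l -> d <= z.
Proof.
elim: l => [|a l IH] H; first by exists 1.
have [|d d0 Hd] := IH; first by move=> z zl; apply: H; rewrite inE zl orbT.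
exists (Num.min d a); first by rewrite lt_min d0 H ?mem_head.
by move=> z; rewrite inE ge_min => /orP [/eqP ->|/Hd ->]; rewrite ?lexx ?orbT.
Qed.

(* A point m of s is the line through (0, x m) and (1, y m); kline k m is    *)
(* the same line rescaled to [0, k].                                          *)
Section Lines.
Variables (T : eqType) (s : seq T) (x y : T -> nat) (R : realFieldType).
Implicit Types (m n : T) (a b r q : R).

Definition kline (k : nat) m (z : R) : R := (k%:R - z) * (x m)%:R + z * (y m)%:R.
Definition line m r : R := kline 1 m r.
Definition slope m : R := (y m)%:R - (x m)%:R.
Definition crossing m n : R := ((x n)%:R - (x m)%:R) / (slope m - slope n).

Definition minimal_at r m : bool := all (fun n => line m r <= line n r) s.
Definition kink r : bool :=
  has (fun m => has (fun n => [&& minimal_at r m, minimal_at r n & slope m != slope n]) s) s.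

Lemma lineE m r : line m r = (x m)%:R + r * slope m.
Proof. by rewrite /line /kline /slope; ring. Qed.

Lemma line_subE n m r a :
  line n r - line m r = (line n a - line m a) + (r - a) * (slope n - slope m).
Proof. by rewrite !lineE; ring. Qed.

Lemma line_sub_crossing n m r : slope m != slope n ->
  line n r - line m r = (slope m - slope n) * (crossing m n - r).
Proof.
by rewrite -subr_eq0 => d0; rewrite /crossing !lineE; field.
Qed.

Lemma kline_scale (k : nat) m (z : R) : (0 < k)%N -> kline k m z = k%:R * line m (z / k%:R).
Proof.
move=> k0; have kn0 : (k%:R : R) != 0 by rewrite pnatr_eq0 -lt0n.
by rewrite /line /kline; field.
Qed.

Lemma kline_natE (k r : nat) m : (r <= k)%N ->
  kline k m (r%:R : R) = ((k - r) * x m + r * y m)%N%:R.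
Proof. by move=> rk; rewrite /kline natrD !natrM natrB. Qed.

Lemma minimal_at_exists r : s != [::] -> exists2 m, m \in s & minimal_at r m.
Proof.
by move=> /(seq_argmin (line^~ r)) [m ms Hm]; exists m => //; apply/allP => n /Hm.
Qed.

Lemma minimal_at_line_eq r m n :
  m \in s -> n \in s -> minimal_at r m -> minimal_at r n -> line m r = line n r.
Proof.
move=> ms ns /allP am /allP an; apply/eqP; rewrite eq_le.
by rewrite (am n ns) (an m ms).
Qed.

Lemma minimal_at_between a b r m :
  a <= r <= b -> minimal_at a m -> minimal_at b m -> minimal_at r m.
Proof.
move=> /andP [ar rb] /allP ma /allP mb; apply/allP => n ns; rewrite -subr_ge0.
have [slope_le|slope_gt] := leP (slope m) (slope n).
  rewrite (line_subE _ _ _ a) addr_ge0 ?subr_ge0 ?ma //.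
  by rewrite mulr_ge0 // subr_ge0.
rewrite (line_subE _ _ _ b) addr_ge0 ?subr_ge0 ?mb //.
by rewrite -mulrNN mulr_ge0 // opprB subr_ge0 // ltW.
Qed.

Lemma kink_crossing r :
  kink r -> exists m n, [/\ m \in s, n \in s, slope m != slope n & r = crossing m n].
Proof.
case/hasP => m ms /hasP [n ns /and3P [mr nr dmn]]; exists m, n; split => //.
have := line_sub_crossing r dmn; rewrite (minimal_at_line_eq ms ns mr nr) subrr.
move/esym/eqP; rewrite mulf_eq0 subr_eq0 (negbTE dmn) subr_eq0 => /eqP.
by [].
Qed.

Lemma minimal_at_until a r m : a <= r -> minimal_at a m ->
  (forall n, n \in s -> slope n < slope m -> r <= crossing m n) -> minimal_at r m.
Proof.
move=> ar /allP ma H; apply/allP => n ns; rewrite -subr_ge0.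
have [lt_nm|ge_nm] := ltP (slope n) (slope m).
  rewrite line_sub_crossing ?gt_eqF //.
  by apply: mulr_ge0; rewrite subr_ge0 ?(ltW lt_nm) ?H.
rewrite (line_subE _ _ _ a) addr_ge0 ?subr_ge0 ?ma //.
by rewrite mulr_ge0 // subr_ge0.
Qed.

(* Take the line m minimal at a of least slope, and its first crossing t with *)
(* a line n of smaller slope: m is minimal on [a, t], so t < b, and at t both *)
(* m and n are minimal.                                                      *)
Lemma kink_between a b : a < b -> s != [::] ->
  (forall m, m \in s -> ~~ (minimal_at a m && minimal_at b m)) ->
  exists2 t, a < t < b & kink t.
Proof.
move=> ab s_ne no_common.
have [m0 m0s m0a] := minimal_at_exists a s_ne.
have A_ne : [seq m <- s | minimal_at a m] != [::].
  by apply/eqP => A0; have := mem_filter (minimal_at a) m0 s; rewrite A0 m0a m0s.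
have [m] := seq_argmin slope A_ne; rewrite mem_filter => /andP [ma ms] m_least.
have not_mb : ~~ minimal_at b m by have := no_common m ms; rewrite ma.
have C_ne : [seq n <- s | slope n < slope m] != [::].
  apply: contra not_mb => /eqP C0; apply: (minimal_at_until (ltW ab) ma) => n ns lt_nm.
  by have := mem_filter (fun n => slope n < slope m) n s; rewrite C0 ns lt_nm.
have [n] := seq_argmin (crossing m) C_ne; rewrite mem_filter => /andP [lt_nm ns] n_first.
set t := crossing m n in n_first *.
have d_mn : slope m != slope n by rewrite gt_eqF.
have m_until r : a <= r -> r <= t -> minimal_at r m.
  move=> ar rt; apply: (minimal_at_until ar ma) => n' n's lt'.
  by apply: le_trans rt (n_first n' _); rewrite mem_filter lt' n's.
have line_t : line n t = line m t.
  by apply/eqP; rewrite -subr_eq0 line_sub_crossing // subrr mulr0.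
have a_le_t : a <= t.
  have := allP ma n ns; rewrite -subr_ge0 line_sub_crossing //.
  by rewrite pmulr_rge0 ?subr_gt0 // subr_ge0.
have a_lt_t : a < t.
  rewrite lt_neqAle a_le_t andbT; apply/eqP => ta; rewrite -ta in line_t.
  have na : minimal_at a n by apply/allP => k ks; rewrite line_t (allP ma k ks).
  by have := m_least n; rewrite mem_filter na ns leNgt lt_nm => /(_ isT).
have t_lt_b : t < b by rewrite ltNge; apply: contra not_mb; apply: m_until (ltW ab).
have mt : minimal_at t m by apply: m_until.
have nt : minimal_at t n by apply/allP => k ks; rewrite line_t (allP mt k ks).
exists t; first by rewrite a_lt_t.
by apply/hasP; exists m => //; apply/hasP; exists n => //; rewrite mt nt.
Qed.

Lemma minimal_at_both_no_kink a b q m : m \in s -> a < q < b ->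
  minimal_at a m -> minimal_at b m -> ~~ kink q.
Proof.
move=> ms /andP [aq qb] ma mb; have mq : minimal_at q m by apply: minimal_at_between ma mb; rewrite (ltW aq) (ltW qb).
have slope_eq n : n \in s -> minimal_at q n -> slope n = slope m.
  move=> ns nq; have diff c : line n c - line m c = (c - q) * (slope n - slope m).
    by rewrite (line_subE _ _ _ q) (minimal_at_line_eq ns ms nq mq) subrr add0r.
  have := allP ma n ns; rewrite -subr_ge0 diff nmulr_rge0 ?subr_lt0 // subr_le0 => le.
  have := allP mb n ns; rewrite -subr_ge0 diff pmulr_rge0 ?subr_gt0 // subr_ge0 => ge.
  by apply/eqP; rewrite eq_le le ge.
apply/hasP => -[m1 m1s /hasP [n1 n1s /and3P [m1q n1q]]].
by rewrite (slope_eq m1) ?(slope_eq n1) ?eqxx.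
Qed.

Lemma minimal_at_bothP a b : a < b -> s != [::] ->
  (exists2 m, m \in s & minimal_at a m && minimal_at b m)
  <-> (forall q, a < q < b -> ~~ kink q).
Proof.
move=> ab s_ne; split=> [[m ms /andP [ma mb]] q abq|no_kink].
  exact: minimal_at_both_no_kink abq ma mb.
have [/hasP [m ms mab]|/hasPn none] := boolP (has (fun m => minimal_at a m && minimal_at b m) s).
  by exists m.
by have [t /no_kink /negP] := kink_between ab s_ne none.
Qed.

End Lines.

Lemma rminseq_le (l : seq RR) z : z \in l -> rminseq l <= z.
Proof.
rewrite /rminseq; move: (head 0 l) => i; elim: l => [//|a l IH].
by rewrite inE big_cons ge_min => /orP [/eqP ->|/IH ->]; rewrite ?lexx ?orbT.
Qed.

Lemma rminseq_mem (l : seq RR) : l != [::] -> rminseq l \in l.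
Proof.
have big_mem i : \big[Num.min/i]_(w <- l) w \in i :: l.
  elim: l => [|a l IH]; first by rewrite big_nil mem_head.
  rewrite big_cons /Num.min; case: ifP => _; first by rewrite !inE eqxx orbT.
  by move: IH; rewrite !inE => /orP [->|->]; rewrite ?orbT.
case: l big_mem => [//|a l] /(_ a) + _; rewrite /rminseq /= inE.
by case/orP => [/eqP ->|//]; apply: mem_head.
Qed.

Lemma rminseq_eq (l : seq RR) v : v \in l -> (forall z, z \in l -> v <= z) -> rminseq l = v.
Proof.
move=> vl H; have l_ne : l != [::] by case: (l) vl.
by apply/eqP; rewrite eq_le rminseq_le // H // rminseq_mem.
Qed.

Section Envelope.
Variables (T : eqType) (s : seq T) (x y : T -> nat).
Local Notation kline := (kline x y).
Local Notation line := (line x y).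
Local Notation slope := (@slope _ x y RR).
Local Notation minimal_at := (minimal_at s x y).
Local Notation kink := (kink s x y).

Definition envelope (k : nat) (z : RR) : RR := rminseq [seq kline k m z | m <- s].

Lemma envelope_le k z m : m \in s -> envelope k z <= kline k m z.
Proof. by move=> ms; apply/rminseq_le/map_f. Qed.

Lemma envelope_ex k z : s != [::] -> exists2 m, m \in s & envelope k z = kline k m z.
Proof.
move=> s_ne; have /rminseq_mem /mapP [m ms e] : [seq kline k m z | m <- s] != [::].
  by case: (s) s_ne.
by exists m.
Qed.

Lemma envelope_eq k z m : m \in s -> (forall n, n \in s -> kline k m z <= kline k n z) ->
  envelope k z = kline k m z.
Proof. by move=> ms H; apply: rminseq_eq => [|_ /mapP [n ns ->]]; [apply: map_f | apply: H]. Qed.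

Lemma envelope1_minimal r m : m \in s -> minimal_at r m -> envelope 1 r = line m r.
Proof. by move=> ms /allP mr; apply: envelope_eq. Qed.

Lemma envelope_scale k z : (0 < k)%N -> s != [::] ->
  envelope k z = k%:R * envelope 1 (z / k%:R).
Proof.
move=> k0 s_ne; have [m ms mz] := minimal_at_exists x y (z / k%:R) s_ne.
rewrite (envelope1_minimal ms mz) -kline_scale //; apply: envelope_eq => // n ns.
by rewrite !kline_scale // ler_pM2l ?ltr0n // (allP mz).
Qed.

Lemma envelope_concave k : s != [::] -> concave_on (envelope k) 0 k%:R.
Proof.
move=> s_ne a b l _ _ /andP [l0 l1].
have [m ms ->] := envelope_ex k (l * a + (1 - l) * b) s_ne.
have -> : kline k m (l * a + (1 - l) * b) = l * kline k m a + (1 - l) * kline k m b.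
  by rewrite /kline; ring.
by rewrite lerD // ler_wpM2l ?subr_ge0 // envelope_le.
Qed.

Lemma kink_not_locally_linear r : kink r -> not_locally_linear (envelope 1) r.
Proof.
case/hasP => m ms /hasP [n ns /and3P [mr nr dmn]] [d [d0 [a [b lin]]]].
have slope_a k : k \in s -> minimal_at r k -> slope k = a.
  move=> ks kr; have gap h : `|h| < d -> 0 <= h * (slope k - a).
    move=> hd; have := envelope_le 1 (r + h) ks; rewrite -/(line k _) lineE.
    rewrite lin; last by rewrite (addrC r) addrK.
    have := envelope1_minimal ks kr; rewrite lin ?subrr ?normr0 // lineE; nra.
  have h0 : 0 < d / 2 by rewrite divr_gt0.
  have hd : `|d / 2| < d by rewrite gtr0_norm // ltr_pdivrMr // ltr_pMr // ltr1n.
  have := gap _ hd; have := gap (- (d / 2)); rewrite normrN => /(_ hd).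
  rewrite mulNr oppr_ge0 => le ge; apply/eqP; rewrite -subr_eq0.
  by apply/eqP; apply: le_anti; rewrite -(pmulr_rge0 _ h0) ge -(pmulr_rle0 _ h0) le.
by move: dmn; rewrite (slope_a m) ?(slope_a n) ?eqxx.
Qed.

(* Kinks can only occur at the finitely many crossings, so away from a kink *)
(* some line is minimal on a whole neighbourhood.                            *)
Lemma no_kink_locally_linear r : s != [::] -> ~~ kink r -> ~ not_locally_linear (envelope 1) r.
Proof.
move=> s_ne nkr; apply.
set cs := [seq crossing x y RR m n | m <- s, n <- s].
have [|d d0 d_le] := @seq_pos_lbound _ [seq `|c - r| | c <- cs & c != r].
  by move=> z /mapP [c]; rewrite mem_filter => /andP [cr _] ->; rewrite normr_gt0 subr_eq0.
have no_kink q : r - d < q < r + d -> ~~ kink q.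
  rewrite -ltr_distlC distrC => qr; apply/negP => kq.
  have [qr_eq|q_neq] := eqVneq q r; first by rewrite -qr_eq kq in nkr.
  have [m [n [ms ns _ qc]]] := kink_crossing kq.
  suff : d <= `|q - r| by rewrite leNgt qr.
  apply/d_le/mapP; exists q => //; rewrite mem_filter q_neq qc.
  exact: allpairs_f.
have rd : r - d < r + d by rewrite ltrBlDr -addrA ltrDl addr_gt0.
have [m ms /andP [ma mb]] := (minimal_at_bothP x y rd s_ne).2 no_kink.
exists d; split => //; exists (slope m), (x m)%:R => z; rewrite ltr_distl => /andP [lz zr].
rewrite (envelope1_minimal ms) ?lineE 1?addrC 1?mulrC //.
by apply: minimal_at_between ma mb; rewrite (ltW lz) (ltW zr).
Qed.

Lemma not_locally_linear_envelopeP r :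
  s != [::] -> not_locally_linear (envelope 1) r <-> kink r.
Proof.
move=> s_ne; split; last exact: kink_not_locally_linear.
by move=> nll; apply/negPn/negP => /(no_kink_locally_linear s_ne).
Qed.

End Envelope.

Lemma int_mul_cellsP (k : nat) (q : rat) : (0 < k)%N -> 0 < q < 1 ->
  (exists z : int, k%:Q * q = z%:~R)
  <-> (forall r, (r < k)%N -> ~~ (r%:R / k%:R < q < r.+1%:R / k%:R)).
Proof.
move=> k0 /andP [q0 q1]; have kpos : (0 : rat) < k%:R by rewrite ltr0n.
have cellE r : (r%:R / k%:R < q < r.+1%:R / k%:R) = ((r%:Z)%:~R < k%:Q * q < (r.+1%:Z)%:~R).
  by rewrite ltr_pdivrMr // ltr_pdivlMr // -!pmulrn [q * _]mulrC.
split=> [[z kq] r rk|cells].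
  by rewrite cellE kq !ltr_int; apply/negP; lia.
set z := Num.floor (k%:Q * q).
have [e|zne] := eqVneq (z%:~R) (k%:Q * q); first by exists z.
have z0 : 0 <= z by rewrite floor_ge0 mulr_ge0 // ltW.
have [r zr] : exists r : nat, z = r%:Z by exists `|z|%N; rewrite gez0_abs.
have zlt : z%:~R < k%:Q * q by rewrite lt_def eq_sym zne floor_le.
have zgt : k%:Q * q < (z + 1)%:~R by apply: floorD1_gt.
have rk : (r < k)%N.
  rewrite -ltz_nat -zr -(ltr_int rat) (lt_le_trans zlt) // -[X in _ <= X]mulr1.
  by rewrite ler_pM2l ?ltW.
have := cells r rk; rewrite cellE -zr zlt /=.
by rewrite -[r.+1]addn1 PoszD -zr zgt.
Qed.

Lemma sorted_notin_between (R : realDomainType) (xs : seq R) i z :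
  sorted <%R xs -> (i.+1 < size xs)%N ->
  nth 0 xs i < z -> z < nth 0 xs i.+1 -> z \notin xs.
Proof.
move=> so isz h1 h2; apply/negP => /(nthP 0) [j jlt ej].
have sle : sorted <=%R xs by move: so; rewrite lt_sorted_uniq_le => /andP [].
have ilt : (i < size xs)%N by apply: ltnW.
have [ji|ij] := leqP j i.
  by have := sorted_leq_nth le_trans lexx 0 sle j i jlt ilt ji; rewrite ej leNgt h1.
by have := sorted_leq_nth le_trans lexx 0 sle i.+1 j isz jlt ij; rewrite ej leNgt h2.
Qed.

(** * Rational kinks *)

Section Kinks.
Variables (T : eqType) (s : seq T) (x y : T -> nat).

Lemma line_ratr m (q : rat) : line x y m (ratr q : RR) = ratr (line x y m q).
Proof. by rewrite /line /kline !(rmorphD, rmorphM, rmorphN, rmorph_nat). Qed.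

Lemma slope_ratr m : slope x y RR m = ratr (slope x y rat m).
Proof. by rewrite /slope rmorphB !rmorph_nat. Qed.

Lemma crossing_ratr m n : crossing x y RR m n = ratr (crossing x y rat m n).
Proof. by rewrite /crossing fmorph_div !slope_ratr !(rmorphD, rmorphN, rmorph_nat). Qed.

Lemma minimal_at_ratr (q : rat) m : minimal_at s x y (ratr q : RR) m = minimal_at s x y q m.
Proof. by apply: eq_all => n; rewrite !line_ratr ler_rat. Qed.

Lemma kink_ratr (q : rat) : kink s x y (ratr q : RR) = kink s x y q.
Proof.
apply: eq_has => m; apply: eq_has => n.
by rewrite !minimal_at_ratr !slope_ratr (inj_eq (fmorph_inj _)).
Qed.

Definition kinks : seq rat :=
  sort <=%R (undup [seq c <- [seq crossing x y rat m n | m <- s, n <- s]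
                     | (0 < c < 1) && kink s x y c]).

Lemma mem_kinks q : (q \in kinks) = (0 < q < 1) && kink s x y q.
Proof.
rewrite mem_sort mem_undup mem_filter andb_idr // => /andP [_ /kink_crossing].
by case=> m [n [ms ns _ ->]]; apply: allpairs_f.
Qed.

Lemma kinks_sorted : sorted <%R kinks.
Proof. by rewrite sort_lt_sorted undup_uniq. Qed.

Lemma ratr_unit_itv (q : rat) : (0 < (ratr q : RR) < 1) = (0 < q < 1).
Proof. by rewrite -(rmorph1 (ratr : {rmorphism rat -> RR})) ltr0q ltr_rat. Qed.

Lemma kink_real_kinksP (r : RR) : (0 < r < 1) && kink s x y r = (r \in map ratr kinks).
Proof.
apply/idP/mapP => [/andP [r01 kr]|[q + ->]]; last by rewrite mem_kinks kink_ratr ratr_unit_itv.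
have [m [n [ms ns _ rc]]] := kink_crossing kr; rewrite rc crossing_ratr in r01 kr *.
by exists (crossing x y rat m n) => //; rewrite mem_kinks -kink_ratr kr -ratr_unit_itv r01.
Qed.

Lemma not_locally_linear_kinksP (r : RR) : s != [::] ->
  (0 < r < 1 /\ not_locally_linear (envelope s x y 1) r) <-> r \in map ratr kinks.
Proof.
move=> s_ne; have nllP := not_locally_linear_envelopeP x y r s_ne.
by rewrite -kink_real_kinksP; split => [[-> /nllP]|/andP [-> /nllP]].
Qed.

Lemma minimal_at_cellsP (k : nat) : (0 < k)%N -> s != [::] ->
  (forall r, (r < k)%N -> exists2 m, m \in s &
     minimal_at s x y (r%:R / k%:R : rat) m && minimal_at s x y (r.+1%:R / k%:R : rat) m)
  <-> (forall q, q \in kinks -> exists z : int, k%:Q * q = z%:~R).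
Proof.
move=> k0 s_ne; have kpos : (0 : rat) < k%:R by rewrite ltr0n.
have cell_ne r : (r%:R / k%:R : rat) < r.+1%:R / k%:R by rewrite ltr_pM2r ?invr_gt0 ?ltr_nat.
have cell_itv r (q : rat) : (r < k)%N -> r%:R / k%:R < q < r.+1%:R / k%:R -> 0 < q < 1.
  move=> rk /andP [rq qr]; apply/andP; split; first by apply: le_lt_trans rq; rewrite divr_ge0.
  by apply: lt_le_trans qr _; rewrite ler_pdivrMr // mul1r ler_nat.
split=> [cells q|ints r rk].
  rewrite mem_kinks => /andP [q01 kq]; apply/(int_mul_cellsP k0 q01) => r rk.
  apply: contraL kq => qcell; exact: (minimal_at_bothP x y (cell_ne r) s_ne).1 (cells r rk) q qcell.
apply/(minimal_at_bothP x y (cell_ne r) s_ne) => q qcell; apply/negP => kq.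
have q01 := cell_itv r q rk qcell.
have /(int_mul_cellsP k0 q01) := ints q (etrans (mem_kinks q) (introT andP (conj q01 kq))).
by move=> /(_ r rk); rewrite qcell.
Qed.

Lemma envelope_piecewise_linear (k : nat) : (0 < k)%N -> s != [::] ->
  piecewise_linear (envelope s x y k) 0 k%:R.
Proof.
move=> k0 s_ne; have kpos : (0 : RR) < k%:R by rewrite ltr0n.
pose inner : seq RR := [seq k%:R * ratr q | q <- kinks].
have inner_itv z : z \in inner -> 0 < z < k%:R.
  case/mapP => q; rewrite mem_kinks -ratr_unit_itv => /andP [/andP [q0 q1] _] ->.
  by rewrite pmulr_rgt0 // q0 /= -[X in _ < X]mulr1 ltr_pM2l.
have inner_sorted : sorted <%R inner.
  apply: (@homo_sorted _ _ (fun q : rat => k%:R * ratr q : RR) <%R <%R _ _ kinks_sorted).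
  by move=> a b ab; rewrite /= ltr_pM2l // ltr_rat.
pose xs : seq RR := 0 :: rcons inner k%:R.
have xs_itv z : z \in xs -> 0 <= z <= k%:R.
  rewrite inE mem_rcons inE => /orP [/eqP ->|/orP [/eqP ->|/inner_itv /andP [z0 zk]]].
  - by rewrite lexx ltW.
  - by rewrite lexx ltW.
  - by rewrite !ltW.
have xs_sorted : sorted <%R xs.
  rewrite /xs /= rcons_path (path_sortedE lt_trans) inner_sorted andbT.
  apply/andP; split; first by apply/allP => z /inner_itv /andP [].
  have : last 0 inner \in 0 :: inner by apply: mem_last.
  by rewrite inE => /orP [/eqP ->|/inner_itv /andP []].
exists xs; split => //=; first by rewrite last_rcons.
move=> i isz; set a := nth 0 xs i; set b := nth 0 xs i.+1.
have ab : a < b := sorted_ltn_nth lt_trans 0 xs_sorted i i.+1 (ltnW isz) isz (ltnSn i).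
have /andP [a0 _] : 0 <= a <= k%:R by apply/xs_itv/mem_nth/ltnW.
have /andP [_ bk] : 0 <= b <= k%:R by apply/xs_itv/mem_nth.
have abk : a / k%:R < b / k%:R by rewrite ltr_pM2r // invr_gt0.
have no_kink t : a / k%:R < t < b / k%:R -> ~~ kink s x y t.
  move=> /andP [a_t t_b]; apply/negP => kt.
  have t01 : 0 < t < 1.
    apply/andP; split; first by apply: le_lt_trans a_t; rewrite divr_ge0.
    by apply: lt_le_trans t_b _; rewrite ler_pdivrMr // mul1r.
  have /mapP [q qk tq] : t \in map ratr kinks by rewrite -kink_real_kinksP t01 kt.
  have : k%:R * t \in xs.
    by rewrite inE mem_rcons inE tq (map_f (fun q : rat => k%:R * ratr q : RR) qk) !orbT.
  apply/negP; apply: (sorted_notin_between xs_sorted isz).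
    by rewrite mulrC -ltr_pdivrMr.
  by rewrite mulrC -ltr_pdivlMr.
have [m ms /andP [ma mb]] := (minimal_at_bothP x y abk s_ne).2 no_kink.
exists (slope x y RR m), (k%:R * (x m)%:R) => z /andP [az zb].
have mz : minimal_at s x y (z / k%:R) m.
  by apply: minimal_at_between ma mb; rewrite !ler_pM2r ?invr_gt0 // az zb.
rewrite envelope_scale // (envelope1_minimal ms mz) lineE.
by field; rewrite pnatr_eq0 -lt0n.
Qed.

End Kinks.

Lemma int_mul_denqP (k : nat) (q : rat) :
  (exists z : int, k%:Q * q = z%:~R) <-> (`|denq q| %| k)%N.
Proof.
split=> [[z kq]|/dvdnP [t ->]]; last first.
  exists (t%:Z * numq q); rewrite PoszM !intrM numqE gez0_abs ?ltW //; ring.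
have : (k%:Z * numq q = z * denq q) by apply: (@intr_inj rat); rewrite !intrM numqE -kq mulrA.
move=> e; have : (denq q %| numq q * k%:Z)%Z by rewrite mulrC e dvdz_mull ?dvdzz.
by rewrite Gauss_dvdzr // /coprimez /gcdz gcdnC; move/eqP: (coprime_num_den q) => ->.
Qed.

Lemma dvdn_biglcm_seq (T : Type) (F : T -> nat) (l : seq T) k :
  (\big[lcmn/1%N]_(x <- l) F x %| k)%N = all (fun x => F x %| k)%N l.
Proof. by elim: l => [|a l IH]; rewrite ?big_nil ?dvd1n // big_cons dvdn_lcm IH. Qed.

Lemma biglcm_seq_gt0 (T : Type) (F : T -> nat) (l : seq T) :
  all (fun x => 0 < F x)%N l -> (0 < \big[lcmn/1%N]_(x <- l) F x)%N.
Proof.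
by elim: l => [|a l IH]; rewrite ?big_nil // big_cons /= lcmn_gt0 => /andP [-> /IH].
Qed.

Lemma int_mul_seqP (l : seq rat) (k : nat) :
  (forall q, q \in l -> exists z : int, k%:Q * q = z%:~R)
  <-> (\big[lcmn/1%N]_(q <- l) `|denq q| %| k)%N.
Proof.
rewrite dvdn_biglcm_seq; split=> [H|/allP H q ql]; last exact/int_mul_denqP/H.
by apply/allP => q ql; apply/int_mul_denqP/H.
Qed.

Lemma minseq_exp_gt0 n (Z : {mpoly CC[n]}) (u v : 'I_n) :
  (exists2 z, z \in msupp Z & z v = 0%N) ->
  (forall z, z \in msupp Z -> (0 < z u)%N || (0 < z v)%N) ->
  (0 < minseq [seq (z : 'X_{1..n}) u | z <- msupp Z & (z : 'X_{1..n}) v == 0%N])%N.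
Proof.
move=> [z0 z0s z0v] H; set l := [seq _ | _ <- _].
have l_ne : l != [::].
  apply/eqP => l0; have : z0 u \in l by apply: map_f; rewrite mem_filter z0v eqxx.
  by rewrite l0.
case/mapP: (minseq_mem l_ne) => z; rewrite mem_filter => /andP [/eqP zv zs] ->.
by have := H z zs; rewrite zv ltnn orbF.
Qed.

(** * Delta' under base change *)

Section Main.
Variables (D : {mpoly CC[3]}) (P p : nat).
Hypothesis D_neq0 : D != 0.
Hypothesis D_survives : forall m, m \in msupp D -> survives 12 P m.
Hypothesis p_lt_P : (p < P)%N.

Local Notation s := (msupp (Dprime D P)).
Local Notation ep := (fun z : 'X_{1..P.+3} => z (ve p)).
Local Notation ep1 := (fun z : 'X_{1..P.+3} => z (ve p.+1)).
Local Notation dmnm := (dprime_mnm D id P).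

Lemma MbarE k : Mbar D P p k = envelope s ep ep1 k.
Proof. by []. Qed.

Let id_survives : forall m, m \in msupp D -> survives 12 P (id m). Proof. exact: D_survives. Qed.

Lemma msupp_Dprime0P z : z \in s <-> exists2 m, m \in msupp D & z = dmnm m.
Proof. by have := msupp_DprimeP (@inj_id _) D_neq0 id_survives z; rewrite mimg_id. Qed.

Lemma dprime0_ve m q : (q <= P)%N -> dmnm m (ve q) = (eexp 12 m q - nord D P q)%N.
Proof. by move=> qP; rewrite dprime_mnm_ve // mimg_id. Qed.

Lemma nord0_le q m : (q <= P)%N -> m \in msupp D -> (nord D P q <= eexp 12 m q)%N.
Proof. by move=> qP ms; have := nord_le (@inj_id _) id_survives qP ms; rewrite mimg_id. Qed.

Lemma dprime0_exp0 q : (q <= P)%N -> exists2 z, z \in s & z (ve q) = 0%N.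
Proof.
move=> qP; have := nord_ex (@inj_id _) D_neq0 id_survives qP; rewrite mimg_id.
case=> m ms e; exists (dmnm m); first by apply/msupp_Dprime0P; exists m.
by rewrite dprime0_ve // e subnn.
Qed.

Lemma eps_gt0 : special_fiber D P p -> (0 < eps0 D P p)%N /\ (0 < eps1 D P p)%N.
Proof.
move=> sf; split; apply: minseq_exp_gt0.
- exact: dprime0_exp0.
- exact: sf.
- exact/dprime0_exp0/ltnW.
- by move=> z zs; rewrite orbC; apply: sf.
Qed.

Lemma Mbar_at0 : Mbar D P p 1 0 = 0.
Proof.
have [z zs z0] := dprime0_exp0 (ltnW p_lt_P).
rewrite MbarE (envelope_eq zs) => [|n ns]; rewrite /kline z0 !(subr0, mul0r, addr0, mulr1n).
  by rewrite mulr0.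
by rewrite !mul1r ler0n.
Qed.

Lemma Mbar_at1 : Mbar D P p 1 1 = 0.
Proof.
have [z zs z0] := dprime0_exp0 p_lt_P.
rewrite MbarE (envelope_eq zs) => [|n ns]; rewrite /kline z0 !(mulr1n, subrr, mul0r, add0r).
  by rewrite mulr0.
by rewrite !mul1r ler0n.
Qed.

Definition line_nat (k r : nat) (z : 'X_{1..P.+3}) : nat := ((k - r) * z (ve p) + r * z (ve p.+1))%N.
Definition nord_interp (k r : nat) : nat := ((k - r) * nord D P p + r * nord D P p.+1)%N.

Lemma eexp_bchange_dprime k r m : (r <= k)%N -> m \in msupp D ->
  eexp 12 (bchange_mnm k m) (k * p + r) = (nord_interp k r + line_nat k r (dmnm m))%N.
Proof.
move=> rk ms; rewrite eexp_bchange //; last exact: survives_le p_lt_P (D_survives ms).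
rewrite /nord_interp /line_nat !dprime0_ve ?(ltnW p_lt_P) // addnACA -!mulnDr.
by rewrite !subnKC ?nord0_le ?(ltnW p_lt_P).
Qed.

Local Notation Db k := (mimg (bchange_mnm k) D).

Let bchange_survives k m : m \in msupp D -> survives 12 (k * P) (bchange_mnm k m).
Proof. by move=> ms; apply/survives_bchange/D_survives. Qed.

Lemma kp_le_kP k r : (r <= k)%N -> (k * p + r <= k * P)%N.
Proof.
move=> rk; apply: leq_trans (_ : k * p.+1 <= _)%N; last by rewrite leq_mul2l p_lt_P orbT.
by rewrite mulnS addnC leq_add2r.
Qed.

Lemma nord_bchange k r : (0 < k)%N -> (r <= k)%N ->
  (exists2 z0, z0 \in s & nord (Db k) (k * P) (k * p + r) = (nord_interp k r + line_nat k r z0)%N) /\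
  (forall z, z \in s -> (nord (Db k) (k * P) (k * p + r) <= nord_interp k r + line_nat k r z)%N).
Proof.
move=> k0 rk; split.
  have [m ms e] := nord_ex (bchange_mnm_inj k0) D_neq0 (@bchange_survives k) (kp_le_kP rk).
  exists (dmnm m); first by apply/msupp_Dprime0P; exists m.
  by rewrite -e eexp_bchange_dprime.
move=> z /msupp_Dprime0P [m ms ->]; rewrite -eexp_bchange_dprime //.
by have := nord_le (bchange_mnm_inj k0) (@bchange_survives k) (kp_le_kP rk) ms.
Qed.

Lemma nord_bchangeE k r : (0 < k)%N -> (r <= k)%N ->
  (nord (Db k) (k * P) (k * p + r))%:R = (nord_interp k r)%:R + Mbar D P p k r%:R :> RR.
Proof.
move=> k0 rk; have [[z0 z0s e] le] := nord_bchange k0 rk.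
rewrite MbarE (envelope_eq z0s) => [|z zs]; rewrite !kline_natE //; first by rewrite e natrD.
by rewrite ler_nat -(leq_add2l (nord_interp k r)) -e le.
Qed.

Lemma minimal_at_LnatE k r z : (0 < k)%N -> (r <= k)%N ->
  minimal_at s ep ep1 (r%:R / k%:R : rat) z = all (fun z' => line_nat k r z <= line_nat k r z')%N s.
Proof.
move=> k0 rk; apply: eq_all => z'.
have lineE z'' : line ep ep1 z'' (r%:R / k%:R : rat) = (line_nat k r z'')%:R / k%:R.
  have := kline_scale ep ep1 z'' (r%:R : rat) k0; rewrite kline_natE //= => e.
  by rewrite /line_nat e; field; rewrite pnatr_eq0 -lt0n.
by rewrite !lineE ler_pM2r ?invr_gt0 ?ltr0n // ler_nat.
Qed.

Lemma dprime_bchange_exp0 k r m : (0 < k)%N -> (r <= k)%N -> m \in msupp D ->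
  (dprime_mnm D (bchange_mnm k) (k * P) m (ve (k * p + r)) == 0%N)
  = minimal_at s ep ep1 (r%:R / k%:R : rat) (dmnm m).
Proof.
move=> k0 rk ms; have [[z0 z0s e] le] := nord_bchange k0 rk.
rewrite dprime_mnm_ve ?kp_le_kP // eexp_bchange_dprime // e minimal_at_LnatE //.
rewrite subn_eq0 leq_add2l; apply/idP/allP => [Lz z zs|/(_ z0 z0s) //].
by apply: leq_trans Lz _; rewrite -(leq_add2l (nord_interp k r)) -e le.
Qed.

Lemma special_fiber_bchangeP k r : (0 < k)%N -> (r < k)%N ->
  ~ special_fiber (Db k) (k * P) (k * p + r) <->
  exists2 z, z \in s & minimal_at s ep ep1 (r%:R / k%:R : rat) z
                       && minimal_at s ep ep1 (r.+1%:R / k%:R : rat) z.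
Proof.
move=> k0 rk; have msuppP := msupp_DprimeP (bchange_mnm_inj k0) D_neq0 (@bchange_survives k).
have exp0 m i : (i <= k)%N -> m \in msupp D -> _ := dprime_bchange_exp0 k0 (r := i) (m := m).
have dmnm_s m : m \in msupp D -> dmnm m \in s by move=> ms; apply/msupp_Dprime0P; exists m.
split=> [nsf|[_ /msupp_Dprime0P [m ms ->] /andP [mr mr1]] sf].
  have [/hasP [z zs zr]|/hasPn none] :=
    boolP (has (fun z => minimal_at s ep ep1 (r%:R / k%:R : rat) z
                         && minimal_at s ep ep1 (r.+1%:R / k%:R : rat) z) s).
    by exists z.
  case: nsf => _ /msuppP [m ms ->]; have := none _ (dmnm_s m ms).
  by rewrite -exp0 ?(ltnW rk) // -addnS -exp0 // !lt0n; case: eqP; case: eqP.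
have mk_s : dprime_mnm D (bchange_mnm k) (k * P) m \in msupp (Dprime (Db k) (k * P)).
  by apply/msuppP; exists m.
have := sf _ mk_s.
have e0 : _ == 0%N := etrans (exp0 m r (ltnW rk) ms) mr.
have e1 : _ == 0%N := etrans (exp0 m r.+1 rk ms) mr1.
by rewrite -addnS (eqP e0) (eqP e1).
Qed.

Lemma no_special_fibers_bchangeP k : (0 < k)%N ->
  (forall pb : nat, (k * p <= pb < k * p.+1)%N -> ~ special_fiber (Db k) (k * P) pb)
  <-> (forall r, (r < k)%N -> exists2 z, z \in s &
         minimal_at s ep ep1 (r%:R / k%:R : rat) z
         && minimal_at s ep ep1 (r.+1%:R / k%:R : rat) z).
Proof.
move=> k0; have e : (k * p.+1 = k * p + k)%N by rewrite mulnS addnC.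
split=> [H r rk|H pb /andP [h1 h2]].
  by apply/(special_fiber_bchangeP k0 rk)/H; rewrite e leq_addr ltn_add2l.
have rk : (pb - k * p < k)%N by rewrite e in h2; lia.
by rewrite -(subnKC h1); apply/(special_fiber_bchangeP k0 rk)/H.
Qed.

Lemma msupp_Dprime_neq0 : s != [::].
Proof. by have [z zs _] := dprime0_exp0 (leq0n P); apply: contraTneq zs => ->. Qed.

Lemma Mbar_scale k r : (0 < k)%N -> Mbar D P p k (k%:R * r) = k%:R * Mbar D P p 1 r.
Proof.
move=> k0; rewrite !MbarE envelope_scale ?msupp_Dprime_neq0 //.
by rewrite [_ * r]mulrC mulfK // pnatr_eq0 -lt0n.
Qed.

Lemma no_special_fibers_kinksP k : (0 < k)%N ->
  (forall pb : nat, (k * p <= pb < k * p.+1)%N -> ~ special_fiber (Db k) (k * P) pb)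
  <-> (forall q, q \in kinks s ep ep1 -> exists z : int, k%:Q * q = z%:~R).
Proof.
move=> k0; apply: iff_trans (no_special_fibers_bchangeP k0) _.
exact: minimal_at_cellsP k0 msupp_Dprime_neq0.
Qed.

End Main.

Theorem lemma2 (f g : {mpoly CC[3]}) (P p : nat)
  (Hf : st_homog f 8) (Hg : st_homog g 12)
  (* not both a >= 4 and b >= 6 (a = oo if f = 0, b = oo if g = 0) *)
  (Hab : ~ ((f = 0 \/ (4 <= sord f)%N) /\ (g = 0 \/ (6 <= sord g)%N)))
  (* the Weierstrass model is not everywhere singular *)
  (HD : Disc f g != 0)
  (* 3-fold orders (4+alpha, 6+beta, 12+gamma) with alpha = 0 or beta = 0,  *)
  (* persisting under all base changes u |-> u^l  (Classes 1-4)            *)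
  (Hcls : forall l : nat, (0 < l)%N ->
     us_ord_ge (bchange l f) 4 /\ us_ord_ge (bchange l g) 6 /\
     us_ord_ge (Disc (bchange l f) (bchange l g)) 12 /\
     (us_ord_eq (bchange l f) 4 \/ us_ord_eq (bchange l g) 6))
  (* P is the first number of blowups at which the condition holds *)
  (HP : condP f g P)
  (HPmin : forall q : nat, (q < P)%N -> ~ condP f g q)
  (* standing assumption *)
  (Hstand :
     (exists i, (i < 4 - sord f)%N /\ Fco f 0 i != 0 /\ mu f P i = 0%N)
     \/ (exists j, (j < 6 - sord g)%N /\ Gco g 0 j != 0 /\ nu g P j = 0%N))
  (Hp : (p < P)%N) :
  let D := Disc f g in
  let M := Mbar D P p 1 in
  (* (1) *)
  (special_fiber D P p -> (0 < eps0 D P p)%N /\ (0 < eps1 D P p)%N)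
  /\
  (forall k : nat, (0 < k)%N ->
     let Db := Disc (bchange k f) (bchange k g) in
     (* (2) *)
     (forall r : nat, (r <= k)%N ->
        (nord Db (k * P) (k * p + r))%:R
        = ((k - r) * nord D P p + r * nord D P p.+1)%N%:R + Mbar D P p k r%:R)
     (* (3), first part *)
     /\ piecewise_linear (Mbar D P p k) 0 k%:R
     /\ concave_on (Mbar D P p k) 0 k%:R
     /\ (forall r : RR, 0 <= r <= 1 -> Mbar D P p k (k%:R * r) = k%:R * M r))
  /\ M 0 = 0 /\ M 1 = 0
  /\
  (* (3), the non-linearity points R_1 < ... < R_(N-1) are rational, and (4) *)
  (exists Rs : seq rat,
     let kint (k : nat) := forall x, x \in Rs -> exists z : int, k%:Q * x = z%:~R in
     let k0 := \big[lcmn/1%N]_(x <- Rs) `|denq x|%N in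
     [/\ sorted <%R Rs,
         (forall r : RR, (0 < r < 1 /\ not_locally_linear M r)
                         <-> r \in [seq ratr x | x <- Rs]),
         (forall k : nat, (0 < k)%N ->
            (forall pb : nat, (k * p <= pb < k * p.+1)%N ->
               ~ special_fiber (Disc (bchange k f) (bchange k g)) (k * P) pb)
            <-> kint k),
         [/\ (0 < k0)%N, kint k0 & forall k : nat, (0 < k)%N -> kint k -> (k0 <= k)%N] &
         (forall k : nat, (0 < k)%N ->
            (forall pb : nat, (k * p <= pb < k * p.+1)%N ->
               ~ special_fiber (Disc (bchange k f) (bchange k g)) (k * P) pb)
            <-> (k0 %| k)%N)]).

Proof.
cbv zeta; have D_survives := Disc_survives Hf Hg HPmin.
have s_ne := msupp_Dprime_neq0 HD D_survives.
have fibersP k k0 := no_special_fibers_kinksP HD D_survives Hp (k := k) k0.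
split; first exact: eps_gt0 HD D_survives Hp.
split.
  move=> k k0; rewrite Disc_bchange; split; first by move=> r; apply: nord_bchangeE.
  split; first exact: envelope_piecewise_linear.
  split; first exact: envelope_concave.
  by move=> r _; apply: Mbar_scale.
split; first exact: Mbar_at0.
split; first exact: Mbar_at1.
exists (kinks (msupp (Dprime (Disc f g) P))
  (fun z : 'X_{1..P.+3} => z (ve p)) (fun z => z (ve p.+1))); split.
- exact: kinks_sorted.
- by move=> r; apply: not_locally_linear_kinksP.
- by move=> k k0; rewrite Disc_bchange; apply: fibersP.
- split; first by apply/biglcm_seq_gt0/allP => q _; rewrite absz_gt0 denq_neq0.
    exact/int_mul_seqP.
  by move=> k k0 /int_mul_seqP /dvdn_leq; apply.
- move=> k k0; rewrite Disc_bchange.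
  exact: iff_trans (fibersP k k0) (int_mul_seqP _ _).
Qed.
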